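(* Let $(s_k)_{k\ge0}$ and $(\sigma_k)_{k\ge0}$ be a binomial transform pair and let $m$, $n$, $r$ be non-negative integers. Then $$\sum_{k = 1}^n \sum_{j = 0}^{k - 1} \frac{(- 1)^j}{n - j + 1}\binom{n}{j}\sum_{p = 0}^r (- 1)^p \binom{r}{p} s_{k + p + m - j} = \frac{(- 1)^n}{n + 1} \sum_{p = 0}^m (- 1)^p \binom{m}{p} \left( \sigma_{n + p + r} - \sigma_{p + r} \right).$$ In particular, $$\sum_{k = 1}^n \sum_{j = 0}^{k - 1} \frac{( - 1)^j }{n - j + 1}\binom{n}{j}\sum_{p = 0}^r ( - 1)^p \binom{r}{p}s_{k + p - j} = \frac{( - 1)^n }{n + 1}\left( \sigma _{n + r} - \sigma _r \right),$$ $$\sum_{k = 1}^n \sum_{j = 0}^{k - 1} \frac{( - 1)^j }{n - j + 1}\binom{n}{j}s_{k + m - j} = \frac{( - 1)^n }{n + 1}\sum_{p = 0}^m ( - 1)^p \binom{m}{p}\left( \sigma _{n + p} - \sigma _p \right),$$ and $$\sum_{k = 1}^n \sum_{j = 0}^{k - 1} \frac{(- 1)^j}{n - j + 1}\binom{n}{j} s_{k - j} = \frac{(- 1)^n}{n + 1}(\sigma_n - \sigma_0).$$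
   Context: Two sequences of complex numbers $(s_n)_{n\ge0}$ and $(\sigma_n)_{n\ge0}$ form a binomial transform pair if $\sigma_n = \sum_{k = 0}^n \binom{n}{k} (-1)^k s_k$ for all $n\ge 0$ (equivalently $s_n = \sum_{k = 0}^n \binom{n}{k} (-1)^k \sigma_k$ for all $n\ge0$). Empty sums are zero. *)

From HB Require Import structures.
From mathcomp Require Import all_boot all_order all_algebra.
From mathcomp Require Import reals complex.
Set Implicit Arguments. Unset Strict Implicit. Unset Printing Implicit Defensive.
Import Order.TTheory GRing.Theory Num.Theory.
Local Open Scope ring_scope.

Definition binomial_transform_pair (R : realType) (s sigma : nat -> R[i]) : Prop :=
  forall n : nat,
    sigma n = \sum_(0 <= k < n.+1) ('C(n, k)%:R * (-1) ^+ k * s k).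

(* Since C(n, j) / (n - j + 1) = C(n + 1, j) / (n + 1), regrouping the double
   sum along the antidiagonals k - j = i and using the partial alternating sums
   sum_(j <= M) (-1)^j C(n + 1, j) = (-1)^M C(n, M) turns the left-hand side,
   for any sequence u in place of the innermost term u (k - j), into
   (-1)^n / (n + 1) * (T u n - T u 0), where T is the binomial transform.
   Each identity is the instance where u is the r-th signed forward difference
   of s shifted by m; T u is then computed from sigma = T s through
   T (sum_p (-1)^p C(r, p) s (. + p)) n = T s (n + r) and
   T (s (. + m)) n = sum_p (-1)^p C(m, p) T s (n + p),
   both consequences of Pascal's rule. *)

From HB Require Import structures.
From mathcomp Require Import all_boot all_order all_algebra.
From mathcomp Require Import reals complex ring zify.
Set Implicit Arguments. Unset Strict Implicit. Unset Printing Implicit Defensive.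
Import Order.TTheory GRing.Theory Num.Theory.
Local Open Scope ring_scope.

Section BinomialTransform.
Variable R : comPzRingType.

Definition binomial_transform (s : nat -> R) (n : nat) : R :=
  \sum_(0 <= k < n.+1) (-1) ^+ k * 'C(n, k)%:R * s k.

Lemma binomial_transform_ext (s t : nat -> R) n :
  s =1 t -> binomial_transform s n = binomial_transform t n.
Proof. by move=> st; apply: eq_bigr => k _; rewrite st. Qed.

Lemma binomial_transformB (s t : nat -> R) n :
  binomial_transform (fun k => s k - t k) n =
  binomial_transform s n - binomial_transform t n.
Proof. by rewrite -sumrB; apply: eq_bigr => k _; rewrite mulrBr. Qed.

Lemma binomial_transform0 (s : nat -> R) : binomial_transform s 0 = s 0%N.
Proof. by rewrite /binomial_transform big_nat1 expr0 bin0 !mul1r. Qed.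

Lemma binomial_transformS (s : nat -> R) n :
  binomial_transform s n.+1 =
  binomial_transform s n - binomial_transform (fun k => s k.+1) n.
Proof.
rewrite /binomial_transform big_nat_recl // [in RHS]big_nat_recl //.
under eq_bigr do rewrite binS natrD exprS mulrDr !mulrDl.
rewrite big_split /= addrA [X in _ = X]addrC -sumrN addrC; congr (_ + _).
  by apply: eq_bigr => k _; ring.
rewrite !bin0 big_nat_recr //= bin_small // mulr0n mulr0 mul0r addr0.
by congr (_ + _); apply: eq_bigr => k _; rewrite exprS.
Qed.

Lemma binomial_transform_shift (s : nat -> R) m n :
  binomial_transform (fun k => s (k + m)%N) n =
  binomial_transform (fun p => binomial_transform s (n + p)) m.
Proof.
elim: m s => [|m IHm] s.
  rewrite binomial_transform0 addn0.
  by apply: binomial_transform_ext => k; rewrite addn0.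
rewrite binomial_transformS -binomial_transformB.
transitivity (binomial_transform (fun k => s (k + m).+1) n).
  by apply: binomial_transform_ext => k; rewrite addnS.
rewrite (IHm (fun k => s k.+1)); apply: binomial_transform_ext => p.
by rewrite addnS binomial_transformS subKr.
Qed.

Lemma binomial_transform_diff (s : nat -> R) r n :
  binomial_transform (fun k => binomial_transform (fun p => s (k + p)%N) r) n =
  binomial_transform s (n + r).
Proof.
elim: r s => [|r IHr] s.
  rewrite addn0; apply: binomial_transform_ext => k.
  by rewrite binomial_transform0 addn0.
transitivity (binomial_transform (fun k =>
    binomial_transform (fun p => s (k + p)%N) r -
    binomial_transform (fun p => s (k + p).+1) r) n).
  apply: binomial_transform_ext => k; rewrite binomial_transformS; congr (_ - _).
  by apply: binomial_transform_ext => p; rewrite addnS.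
by rewrite binomial_transformB IHr (IHr (fun k => s k.+1)) -binomial_transformS addnS.
Qed.

Lemma binomial_transform_diff_shift (s : nat -> R) m r n :
  binomial_transform (fun k => binomial_transform (fun p => s (k + p + m)%N) r) n =
  binomial_transform (fun p => binomial_transform s (n + p + r)) m.
Proof.
rewrite (binomial_transform_diff (fun q => s (q + m)%N)) binomial_transform_shift.
by apply: binomial_transform_ext => p; rewrite addnAC.
Qed.

End BinomialTransform.

Lemma sum_antidiagonal (V : nmodType) (G : nat -> nat -> V) n :
  \sum_(1 <= k < n.+1) \sum_(0 <= j < k) G j (k - j)%N =
  \sum_(1 <= i < n.+1) \sum_(0 <= j < (n - i).+1) G j i.
Proof.
elim: n => [|n IHn]; first by rewrite !big_geq.
have antidiag : \sum_(0 <= j < n.+1) G j (n.+1 - j)%N =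
                \sum_(1 <= i < n.+2) G (n.+1 - i)%N i.
  rewrite big_nat_rev big_add1 /=; apply: eq_big_nat => j /andP[_ ltjn].
  by congr G; lia.
rewrite big_nat_recr //= IHn antidiag [X in _ + X = _]big_nat_recr //= addrA.
rewrite [in RHS]big_nat_recr //= subnn big_nat1 -big_split /=; congr (_ + _).
by apply: eq_big_nat => i /andP[_ lt_in]; rewrite subSn // [RHS]big_nat_recr.
Qed.

Lemma signr_subn (R : pzRingType) n i : (i <= n)%N ->
  (-1) ^+ (n - i) = (-1) ^+ n * (-1) ^+ i :> R.
Proof.
move=> le_in; rewrite -{2}(subnK le_in) exprD -mulrA -exprD addnn -mul2n.
by rewrite exprM sqrrN !expr1n mulr1.
Qed.

Lemma sum_signed_binS (R : pzRingType) n m :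
  \sum_(0 <= j < m.+1) (-1) ^+ j * 'C(n.+1, j)%:R = (-1) ^+ m * 'C(n, m)%:R :> R.
Proof.
elim: m => [|m IHm]; first by rewrite big_nat1 !bin0.
rewrite big_nat_recr //= IHm exprS !mulN1r !mulNr binS natrD mulrDr opprD.
by rewrite addrA addrAC subrr add0r.
Qed.

Lemma bin_div_succ (F : numFieldType) n j : (j <= n)%N ->
  'C(n, j)%:R / (n - j + 1)%N%:R = 'C(n.+1, j)%:R / (n + 1)%N%:R :> F.
Proof.
move=> le_jn; apply/eqP; rewrite eqr_div ?pnatr_eq0 ?addn1 // -!natrM eqr_nat.
by rewrite mulnC mul_bin_down subSn // mulnC.
Qed.

Lemma sum_binomial_weights (F : numFieldType) (g : nat -> nat -> F) (u : nat -> F) n :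
  (forall k j, (j < k)%N -> g k j = u (k - j)%N) ->
  \sum_(1 <= k < n.+1) \sum_(0 <= j < k)
      ((-1) ^+ j / (n - j + 1)%N%:R * 'C(n, j)%:R * g k j) =
  (-1) ^+ n / (n + 1)%N%:R * (binomial_transform u n - binomial_transform u 0).
Proof.
move=> gE; set c := ((n + 1)%N%:R)^-1 : F.
transitivity (\sum_(1 <= k < n.+1) \sum_(0 <= j < k)
                ((-1) ^+ j * 'C(n.+1, j)%:R * c * u (k - j)%N)).
  apply: eq_big_nat => k /andP[_ le_kn]; apply: eq_big_nat => j /andP[_ lt_jk].
  rewrite gE // [(-1) ^+ j / _ * _]mulrAC -[(-1) ^+ j * _ / _]mulrA.
  by rewrite bin_div_succ ?mulrA; last lia.
rewrite (sum_antidiagonal (fun j i => (-1) ^+ j * 'C(n.+1, j)%:R * c * u i)).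
have inner i : (i <= n)%N ->
    \sum_(0 <= j < (n - i).+1) ((-1) ^+ j * 'C(n.+1, j)%:R * c * u i) =
    (-1) ^+ n * c * ((-1) ^+ i * 'C(n, i)%:R * u i).
  move=> le_in; rewrite -!big_distrl /= sum_signed_binS bin_sub // signr_subn //.
  by ring.
under eq_big_nat => i /andP[_ lt_in] do rewrite inner //.
rewrite -big_distrr /= binomial_transform0 /binomial_transform.
by rewrite [in RHS]big_nat_recl // bin0 expr0 !mul1r addrAC subrr add0r big_add1.
Qed.

Theorem theorem10 (R : realType) (s sigma : nat -> R[i])
  (hpair : binomial_transform_pair s sigma) (m n r : nat) :
  (\sum_(1 <= k < n.+1) \sum_(0 <= j < k)
      ((-1) ^+ j / (n - j + 1)%N%:R * 'C(n, j)%:R *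
       \sum_(0 <= p < r.+1) ((-1) ^+ p * 'C(r, p)%:R * s (k + p + m - j)%N))
   = (-1) ^+ n / (n + 1)%N%:R *
     \sum_(0 <= p < m.+1) ((-1) ^+ p * 'C(m, p)%:R *
                           (sigma (n + p + r)%N - sigma (p + r)%N)))
  /\
  (\sum_(1 <= k < n.+1) \sum_(0 <= j < k)
      ((-1) ^+ j / (n - j + 1)%N%:R * 'C(n, j)%:R *
       \sum_(0 <= p < r.+1) ((-1) ^+ p * 'C(r, p)%:R * s (k + p - j)%N))
   = (-1) ^+ n / (n + 1)%N%:R * (sigma (n + r)%N - sigma r))
  /\
  (\sum_(1 <= k < n.+1) \sum_(0 <= j < k)
      ((-1) ^+ j / (n - j + 1)%N%:R * 'C(n, j)%:R * s (k + m - j)%N)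
   = (-1) ^+ n / (n + 1)%N%:R *
     \sum_(0 <= p < m.+1) ((-1) ^+ p * 'C(m, p)%:R *
                           (sigma (n + p)%N - sigma p)))
  /\
  (\sum_(1 <= k < n.+1) \sum_(0 <= j < k)
      ((-1) ^+ j / (n - j + 1)%N%:R * 'C(n, j)%:R * s (k - j)%N)
   = (-1) ^+ n / (n + 1)%N%:R * (sigma n - sigma 0%N)).
Proof.
have sigmaE N : binomial_transform s N = sigma N.
  by rewrite hpair; apply: eq_bigr => k _; rewrite (mulrC (_ ^+ _)).
split.
  rewrite (sum_binomial_weights (u := fun k =>
             binomial_transform (fun p => s (k + p + m)%N) r)); last first.
    by move=> k j lt_jk; apply: eq_bigr => p _; congr (_ * s _); lia.
  rewrite !binomial_transform_diff_shift -binomial_transformB; congr (_ * _).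
  by apply: binomial_transform_ext => p; rewrite !sigmaE add0n.
split.
  rewrite (sum_binomial_weights (u := fun k =>
             binomial_transform (fun p => s (k + p)%N) r)); last first.
    by move=> k j lt_jk; apply: eq_bigr => p _; congr (_ * s _); lia.
  by rewrite !binomial_transform_diff !sigmaE add0n.
split.
  rewrite (sum_binomial_weights (u := fun k => s (k + m)%N)); last first.
    by move=> k j lt_jk; congr s; lia.
  rewrite !binomial_transform_shift -binomial_transformB; congr (_ * _).
  by apply: binomial_transform_ext => p; rewrite !sigmaE add0n.
by rewrite (sum_binomial_weights (u := s)) // !sigmaE.
Qed.
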